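(* Let $0\le c<1$. For the best-worst rule $s=(c,4)$ there is a unique non-convergent Nash equilibrium (up to relabelling of candidates), namely $x=((x^1,2),(1-x^1,2))$ with $x^1=\frac{1}{4}(1+c)$. For the rule $s=(c,5)$ there is a unique non-convergent Nash equilibrium (up to relabelling of candidates), namely $x=((x^1,2),(1/2,1),(1-x^1,2))$ with $x^1=\frac16(1+2c)$.
   Context: Setting: voters' ideal points are distributed uniformly (unit mass, Lebesgue measure) on $[0,1]$. There are $m$ candidates; a profile is $x=(x_1,\dots,x_m)\in[0,1]^m$. A voter with ideal point $y$ ranks candidates by distance $|x_i-y|$ (closer is better); ties are broken by a fair lottery (uniformly random strict order among tied candidates). Under the best-worst rule $s=(c,m)$ ($c\ge0$), a candidate receives $1$ point from each voter ranking her first, $-c$ from each voter ranking her last ($m$-th), and $0$ otherwise; $v_i(x)$ is candidate $i$'s expected total points. A (pure-strategy Nash) equilibrium is a profile $x^*$ with $v_i(x^* )\ge v_i(t,x^*_{-i})$ for all $i$ and $t\in[0,1]$ ($(t,x_{-i})$ is $x$ with $x_i$ replaced by $t$); it is non-convergent (NCNE) if at least two platforms are distinct. Notation $x=((x^1,n_1),\dots,(x^q,n_q))$ lists the distinct occupied positions $x^1<\dots<x^q$ with $n_j$ candidates at $x^j$. *)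

From Stdlib Require Import Reals Lra List ClassicalEpsilon.
Import ListNotations.
Open Scope R_scope.

(* A profile of m candidates is x : nat -> R, candidate indices 0..m-1. *)

Definition ncount (m : nat) (p : nat -> bool) : nat :=
  length (filter p (seq 0 m)).

Definition Rltb (a b : R) : bool := if Rlt_dec a b then true else false.
Definition Reqb (a b : R) : bool := if Req_dec_T a b then true else false.

(* Expected points that candidate i receives from the voter with ideal point y
   under the best-worst rule (c, m), with fair-lottery tie-breaking:
   if a candidates are strictly closer to y than i and k candidates (i included)
   are exactly as close as i, then i's rank is uniform on {a+1, ..., a+k}.
   So P(first) = 1/k if a = 0 (else 0) and P(last) = 1/k if a + k = m (else 0). *)
Definition score_at (c : R) (m : nat) (x : nat -> R) (i : nat) (y : R) : R :=
  let d := Rabs (x i - y) in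
  let a := ncount m (fun j => Rltb (Rabs (x j - y)) d) in
  let k := ncount m (fun j => Reqb (Rabs (x j - y)) d) in
  (if Nat.eqb a 0 then / INR k else 0)
  - c * (if Nat.eqb (a + k) m then / INR k else 0).

(* Integral over the voters (uniform unit mass on [0,1]) as a Riemann integral;
   the integrand is a step function, hence Riemann integrable. *)
Definition integral01 (f : R -> R) : R :=
  epsilon (inhabits 0) (fun v => exists pr : Riemann_integrable f 0 1, RiemannInt pr = v).

Definition vscore (c : R) (m : nat) (x : nat -> R) (i : nat) : R :=
  integral01 (score_at c m x i).

Definition upd (x : nat -> R) (i : nat) (t : R) : nat -> R :=
  fun j => if Nat.eqb j i then t else x j.

Definition is_profile (m : nat) (x : nat -> R) : Prop :=
  forall j, (j < m)%nat -> 0 <= x j <= 1.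

Definition is_NE (c : R) (m : nat) (x : nat -> R) : Prop :=
  is_profile m x /\
  forall i t, (i < m)%nat -> 0 <= t <= 1 -> vscore c m (upd x i t) i <= vscore c m x i.

Definition is_NCNE (c : R) (m : nat) (x : nat -> R) : Prop :=
  is_NE c m x /\ exists i j, (i < m)%nat /\ (j < m)%nat /\ x i <> x j.

Definition nat_pos (m : nat) (x : nat -> R) (p : R) : nat :=
  ncount m (fun j => Reqb (x j) p).

(** Alone strictly
    between occupied positions a < b she gets (b - a)/2; as the leftmost candidate she
    gets the voters up to the midpoint with her right neighbour, minus c times the voters
    beyond the midpoint with the rightmost position, shared with the candidates at her
    position.  The reflection y |-> 1 - y preserves all payoffs, which gives the rightmost
    case.  An extreme candidate of an equilibrium is never alone, since moving inward
    strictly increases her payoff; so four candidates form two pairs, and five form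
    groups of sizes 2+3, 3+2 or 2+1+2.  Comparing the payoffs of the extreme candidates
    with the deviations into a gap between occupied positions and to just outside the
    extreme positions gives linear inequalities, which are infeasible for 2+3 and 3+2 and
    force the stated positions otherwise.  Conversely, checking every deviation shows
    that the stated profiles are equilibria. *)

From Stdlib Require Import Reals Lra Lia List Classical ClassicalEpsilon FunctionalExtensionality
  PropExtensionality.
From Coquelicot Require Import Coquelicot.
Open Scope R_scope.
Open Scope bool_scope.

Lemma ncount_S m p : ncount (S m) p = (ncount m p + (if p m then 1 else 0))%nat.
Proof.
  unfold ncount. rewrite seq_S, filter_app, length_app. simpl.
  destruct (p m); reflexivity.
Qed.

Lemma ncount_ext m p q :
  (forall j, (j < m)%nat -> p j = q j) -> ncount m p = ncount m q.
Proof.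
  induction m as [|m IH]; intros H; [reflexivity|].
  rewrite !ncount_S, IH by (intros; apply H; lia). rewrite H by lia. reflexivity.
Qed.

Lemma ncount_le m p : (ncount m p <= m)%nat.
Proof.
  induction m as [|m IH]; [reflexivity|]. rewrite ncount_S. destruct (p m); lia.
Qed.

Lemma ncount_zero m p : (forall j, (j < m)%nat -> p j = false) -> ncount m p = 0%nat.
Proof.
  induction m as [|m IH]; intros H; [reflexivity|].
  rewrite ncount_S, IH by (intros; apply H; lia). rewrite H by lia. reflexivity.
Qed.

Lemma ncount_all m p : (forall j, (j < m)%nat -> p j = true) -> ncount m p = m.
Proof.
  induction m as [|m IH]; intros H; [reflexivity|].
  rewrite ncount_S, IH by (intros; apply H; lia). rewrite H by lia. lia.
Qed.

Lemma ncount_split_at m p i : (i < m)%nat ->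
  ncount m p = (ncount m (fun j => p j && negb (Nat.eqb j i)) + (if p i then 1 else 0))%nat.
Proof.
  induction m as [|m IH]; intros Hi; [lia|]. rewrite !ncount_S.
  destruct (Nat.eq_dec i m) as [->|Hne].
  - rewrite Nat.eqb_refl, Bool.andb_false_r, Nat.add_0_r.
    rewrite (ncount_ext m (fun j => p j && negb (j =? m)) p); [reflexivity|].
    intros j Hj. replace (j =? m)%nat with false by (symmetry; apply Nat.eqb_neq; lia).
    apply Bool.andb_true_r.
  - rewrite IH by lia. replace (m =? i)%nat with false by (symmetry; apply Nat.eqb_neq; lia).
    rewrite Bool.andb_true_r. lia.
Qed.

Lemma ncount_pos m p i : (i < m)%nat -> p i = true -> (0 < ncount m p)%nat.
Proof. intros Hi Hp. rewrite (ncount_split_at m p i Hi), Hp. lia. Qed.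

Lemma ncount_ge2 m p i j : (i < m)%nat -> (j < m)%nat -> i <> j ->
  p i = true -> p j = true -> (2 <= ncount m p)%nat.
Proof.
  intros Hi Hj Hij Hpi Hpj. rewrite (ncount_split_at m p i Hi), Hpi.
  enough (0 < ncount m (fun k => p k && negb (k =? i)))%nat by lia.
  apply (ncount_pos _ _ j Hj). rewrite Hpj. simpl.
  replace (j =? i)%nat with false by (symmetry; apply Nat.eqb_neq; auto). reflexivity.
Qed.

Lemma ncount_pos_ex m p : (0 < ncount m p)%nat -> exists j, (j < m)%nat /\ p j = true.
Proof.
  intros H. apply NNPP. intros Hno. rewrite ncount_zero in H; [lia|].
  intros j Hj. apply Bool.not_true_is_false. intros Hp. eauto.
Qed.

Lemma ncount_ge2_ex m p i : (2 <= ncount m p)%nat -> (i < m)%nat ->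
  exists j, (j < m)%nat /\ j <> i /\ p j = true.
Proof.
  intros H Hi. rewrite (ncount_split_at m p i Hi) in H.
  destruct (ncount_pos_ex m (fun j => p j && negb (j =? i))) as [j [Hj Hpj]];
    [destruct (p i); lia|].
  apply Bool.andb_true_iff in Hpj as [Hpj Hji].
  exists j. split; [|split]; auto. apply Nat.eqb_neq. now destruct (j =? i)%nat.
Qed.

Lemma ncount_lt_ex m p : (ncount m p < m)%nat -> exists j, (j < m)%nat /\ p j = false.
Proof.
  induction m as [|m IH]; intros H; [lia|]. rewrite ncount_S in H.
  destruct (p m) eqn:Hm.
  - destruct IH as [j [Hj Hpj]]; [lia|]. exists j; split; [lia|auto].
  - exists m; split; [lia|auto].
Qed.

Lemma ncount_lt m p j : (j < m)%nat -> p j = false -> (ncount m p < m)%nat.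
Proof.
  induction m as [|m IH]; intros Hj Hp; [lia|]. rewrite ncount_S.
  destruct (Nat.eq_dec j m) as [->|Hne].
  - rewrite Hp. pose proof (ncount_le m p). lia.
  - specialize (IH ltac:(lia) Hp). destruct (p m); lia.
Qed.

Lemma ncount_full m p : ncount m p = m -> forall j, (j < m)%nat -> p j = true.
Proof.
  intros H j Hj. destruct (p j) eqn:E; auto. pose proof (ncount_lt m p j Hj E). lia.
Qed.

Lemma ncount_orb m p q : (forall j, (j < m)%nat -> p j = true -> q j = false) ->
  ncount m (fun j => p j || q j) = (ncount m p + ncount m q)%nat.
Proof.
  induction m as [|m IH]; intros H; [reflexivity|].
  rewrite !ncount_S, IH by (intros; apply H; auto; lia).
  specialize (H m ltac:(lia)). destruct (p m), (q m); simpl; lia.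
Qed.

Lemma Reqb_true a b : Reqb a b = true <-> a = b.
Proof. unfold Reqb; destruct Req_dec_T; split; congruence. Qed.

Lemma Reqb_false a b : Reqb a b = false <-> a <> b.
Proof. unfold Reqb; destruct Req_dec_T; split; congruence. Qed.

Lemma Rltb_true a b : Rltb a b = true <-> a < b.
Proof. unfold Rltb; destruct Rlt_dec; split; congruence || tauto. Qed.

Lemma Rltb_false a b : Rltb a b = false <-> ~ a < b.
Proof. unfold Rltb; destruct Rlt_dec; split; congruence || tauto. Qed.

Ltac pointwise_lra H :=
  let j := fresh "j" in let Hj := fresh "Hj" in let Hne := fresh "Hne" in
  intros j Hj; first [intros Hne; specialize (H j Hj Hne) | specialize (H j Hj)]; lra.

Lemma upd_eq x i t : upd x i t i = t.
Proof. unfold upd. now rewrite Nat.eqb_refl. Qed.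

Lemma upd_neq x i t j : j <> i -> upd x i t j = x j.
Proof. intros H. unfold upd. now rewrite (proj2 (Nat.eqb_neq j i) H). Qed.

Lemma upd_same x i : upd x i (x i) = x.
Proof.
  apply functional_extensionality. intros j. unfold upd.
  destruct (Nat.eqb_spec j i); congruence.
Qed.

Definition refl (x : nat -> R) : nat -> R := fun j => 1 - x j.

Lemma refl_upd x i t : refl (upd x i t) = upd (refl x) i (1 - t).
Proof.
  apply functional_extensionality. intros j. unfold refl, upd. now destruct (j =? i)%nat.
Qed.

Lemma refl_refl x : refl (refl x) = x.
Proof. apply functional_extensionality. intros j. unfold refl. ring. Qed.

Lemma nat_pos_refl m x p : nat_pos m (refl x) p = nat_pos m x (1 - p).
Proof.
  apply ncount_ext. intros j _. unfold refl, Reqb.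
  destruct Req_dec_T, Req_dec_T; auto; exfalso; lra.
Qed.

Lemma nat_pos_ge2 m x p i j : (i < m)%nat -> (j < m)%nat -> i <> j ->
  x i = p -> x j = p -> (2 <= nat_pos m x p)%nat.
Proof. intros. apply (ncount_ge2 _ _ i j); auto; apply Reqb_true; auto. Qed.

Lemma nat_pos_pos m x i : (i < m)%nat -> (0 < nat_pos m x (x i))%nat.
Proof. intros Hi. apply (ncount_pos _ _ i Hi). now apply Reqb_true. Qed.

Lemma nat_pos_witness m x p : (0 < nat_pos m x p)%nat -> exists j, (j < m)%nat /\ x j = p.
Proof.
  intros H. destruct (ncount_pos_ex _ _ H) as [j [Hj E]]. apply Reqb_true in E. eauto.
Qed.

Lemma nat_pos_other m x i : (i < m)%nat -> (2 <= nat_pos m x (x i))%nat ->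
  exists j, (j < m)%nat /\ j <> i /\ x j = x i.
Proof.
  intros Hi H. destruct (ncount_ge2_ex _ _ i H Hi) as [j [Hj [Hji E]]].
  apply Reqb_true in E. eauto.
Qed.

Lemma nat_pos_add2 m x a b : a <> b ->
  ncount m (fun j => Reqb (x j) a || Reqb (x j) b) = (nat_pos m x a + nat_pos m x b)%nat.
Proof.
  intros Hab. apply ncount_orb. intros j _ E. apply Reqb_true in E. apply Reqb_false. congruence.
Qed.

Lemma nat_pos_add3 m x a b d : a <> b -> a <> d -> b <> d ->
  ncount m (fun j => Reqb (x j) a || Reqb (x j) b || Reqb (x j) d)
  = (nat_pos m x a + nat_pos m x b + nat_pos m x d)%nat.
Proof.
  intros Hab Had Hbd. rewrite ncount_orb, nat_pos_add2; [reflexivity|auto|].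
  intros j _ E. apply Bool.orb_true_iff in E as [E|E]; apply Reqb_true in E;
    apply Reqb_false; congruence.
Qed.

Lemma nat_pos_cover2 m x a b : a <> b -> (nat_pos m x a + nat_pos m x b)%nat = m ->
  forall j, (j < m)%nat -> x j = a \/ x j = b.
Proof.
  intros Hab H j Hj. rewrite <- nat_pos_add2 in H by auto.
  pose proof (ncount_full _ _ H j Hj) as E.
  apply Bool.orb_true_iff in E as [E|E]; apply Reqb_true in E; auto.
Qed.

Lemma nat_pos_cover3 m x a b d : a <> b -> a <> d -> b <> d ->
  (nat_pos m x a + nat_pos m x b + nat_pos m x d)%nat = m ->
  forall j, (j < m)%nat -> x j = a \/ x j = b \/ x j = d.
Proof.
  intros Hab Had Hbd H j Hj. rewrite <- nat_pos_add3 in H by auto.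
  pose proof (ncount_full _ _ H j Hj) as E.
  apply Bool.orb_true_iff in E as [E|E]; [apply Bool.orb_true_iff in E as [E|E]|];
    apply Reqb_true in E; auto.
Qed.

Lemma nat_pos_outside2 m x a b : a <> b -> (nat_pos m x a + nat_pos m x b < m)%nat ->
  exists j, (j < m)%nat /\ x j <> a /\ x j <> b.
Proof.
  intros Hab H. rewrite <- nat_pos_add2 in H by auto.
  destruct (ncount_lt_ex _ _ H) as [j [Hj E]].
  apply Bool.orb_false_iff in E as [Ea Eb]. apply Reqb_false in Ea, Eb. eauto.
Qed.

Lemma nat_pos_upd_fresh m x i t : (i < m)%nat ->
  (forall j, (j < m)%nat -> j <> i -> x j <> t) -> nat_pos m (upd x i t) t = 1%nat.
Proof.
  intros Hi H. unfold nat_pos. rewrite (ncount_split_at _ _ i Hi), upd_eq.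
  rewrite ncount_zero; [unfold Reqb; destruct Req_dec_T; [reflexivity|congruence]|].
  intros j Hj. destruct (Nat.eqb_spec j i) as [->|Hne]; [apply Bool.andb_false_r|].
  rewrite upd_neq by auto. apply Bool.andb_false_iff. left. apply Reqb_false; auto.
Qed.

Lemma nat_pos_upd_join m x i t : (i < m)%nat -> x i <> t ->
  nat_pos m (upd x i t) t = S (nat_pos m x t).
Proof.
  intros Hi Hne. unfold nat_pos.
  rewrite (ncount_split_at _ (fun j => Reqb (upd x i t j) t) i Hi).
  rewrite (ncount_split_at _ (fun j => Reqb (x j) t) i Hi), upd_eq.
  rewrite (proj2 (Reqb_true t t) eq_refl), (proj2 (Reqb_false _ _) Hne).
  rewrite (ncount_ext _ _ (fun j => Reqb (x j) t && negb (j =? i))); [lia|].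
  intros j _. destruct (Nat.eqb_spec j i) as [->|Hji].
  - rewrite !Bool.andb_false_r. reflexivity.
  - rewrite upd_neq; auto.
Qed.

Lemma integral01_is_RInt f v : is_RInt f 0 1 v -> integral01 f = v.
Proof.
  intros H. unfold integral01.
  assert (E : exists v', exists pr : Riemann_integrable f 0 1, RiemannInt pr = v').
  { exists v, (ex_RInt_Reals_0 _ _ _ (ex_intro _ v H)).
    rewrite <- RInt_Reals. now apply is_RInt_unique. }
  destruct (epsilon_spec (inhabits 0) _ E) as [pr <-].
  rewrite <- RInt_Reals. now apply is_RInt_unique.
Qed.

Lemma is_RInt_reflect (f : R -> R) (v : R) : is_RInt f 0 1 v -> is_RInt (fun y => f (1 - y)) 0 1 v.
Proof.
  intros H.
  assert (H' : @is_RInt R_NormedModule f (-1 * 0 + 1) (-1 * 1 + 1) (- v)).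
  { replace (-1 * 0 + 1) with 1 by ring. replace (-1 * 1 + 1) with 0 by ring.
    exact (is_RInt_swap _ _ _ _ H). }
  apply is_RInt_comp_lin, is_RInt_opp in H'.
  replace v with (opp (- v)) by (change (- - v = v); ring).
  refine (is_RInt_ext _ _ _ _ _ _ H'). intros y _.
  change (- (-1 * f (-1 * y + 1)) = f (1 - y)). replace (-1 * y + 1) with (1 - y); ring.
Qed.

(* This also holds when [f] is not Riemann integrable: both sides are then [epsilon] of the
   empty predicate. *)
Lemma integral01_reflect f : integral01 (fun y => f (1 - y)) = integral01 f.
Proof.
  destruct (classic (ex_RInt f 0 1)) as [[v H]|Hno].
  - rewrite (integral01_is_RInt _ _ H). now apply integral01_is_RInt, is_RInt_reflect.
  - unfold integral01. f_equal.
    apply functional_extensionality. intros v. apply propositional_extensionality.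
    split; intros [pr _]; exfalso; apply Hno; apply ex_RInt_Reals_1 in pr.
    + destruct pr as [w Hw]. exists w. apply is_RInt_reflect in Hw.
      refine (is_RInt_ext _ _ _ _ _ _ Hw). intros y _. now replace (1 - (1 - y)) with y by ring.
    + exact pr.
Qed.

Lemma is_RInt_step3 (f : R -> R) p q a b d :
  0 <= p <= q -> q <= 1 ->
  (forall y, 0 < y < p -> f y = a) ->
  (forall y, p < y < q -> f y = b) ->
  (forall y, q < y < 1 -> f y = d) ->
  is_RInt f 0 1 (a * p + b * (q - p) + d * (1 - q)).
Proof.
  intros Hpq Hq Ha Hb Hd.
  assert (Hcst : forall u w e, u <= w -> (forall y, u < y < w -> f y = e) ->
                  is_RInt f u w (e * (w - u))).
  { intros u w e Huw He.
    apply (is_RInt_ext (fun _ => e)).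
    - intros y Hy. symmetry. apply He. revert Hy. unfold Rmin, Rmax.
      destruct Rle_dec; lra.
    - replace (e * (w - u)) with (scal (w - u) e) by (unfold scal; simpl; unfold mult; simpl; ring).
      apply (@is_RInt_const R_NormedModule). }
  replace (a * p + b * (q - p) + d * (1 - q)) with
    (plus (plus (a * (p - 0)) (b * (q - p))) (d * (1 - q))) by (unfold plus; simpl; ring).
  apply (@is_RInt_Chasles R_NormedModule _ _ q); [apply (@is_RInt_Chasles R_NormedModule _ _ p)|];
    apply Hcst; auto; lra.
Qed.

(* [score_at c m y i v] unfolds to [prob_first m y i v - c * prob_last m y i v]. *)
Definition n_closer m (y : nat -> R) i v :=
  ncount m (fun j => Rltb (Rabs (y j - v)) (Rabs (y i - v))).
Definition n_tied m (y : nat -> R) i v :=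
  ncount m (fun j => Reqb (Rabs (y j - v)) (Rabs (y i - v))).
Definition prob_first m y i v :=
  if Nat.eqb (n_closer m y i v) 0 then / INR (n_tied m y i v) else 0.
Definition prob_last m y i v :=
  if Nat.eqb (n_closer m y i v + n_tied m y i v) m then / INR (n_tied m y i v) else 0.

Ltac solve_Rabs := unfold Rabs in *; repeat destruct Rcase_abs; lra.

Lemma n_tied_nat_pos m y i v :
  (forall j, (j < m)%nat -> y j <> y i -> Rabs (y j - v) <> Rabs (y i - v)) ->
  n_tied m y i v = nat_pos m y (y i).
Proof.
  intros H. apply ncount_ext. intros j Hj.
  destruct (Req_dec (y j) (y i)) as [E|E].
  - rewrite E, !(proj2 (Reqb_true _ _) eq_refl). reflexivity.
  - rewrite !(proj2 (Reqb_false _ _)); auto.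
Qed.

Lemma prob_first_nearest m y i v :
  (forall j, (j < m)%nat -> y j <> y i -> Rabs (y i - v) < Rabs (y j - v)) ->
  prob_first m y i v = / INR (nat_pos m y (y i)).
Proof.
  intros H. unfold prob_first, n_closer.
  rewrite ncount_zero, n_tied_nat_pos; [reflexivity| |].
  - pointwise_lra H.
  - intros j Hj. apply Rltb_false.
    destruct (Req_dec (y j) (y i)) as [->|E]; [lra|]. specialize (H j Hj E). lra.
Qed.

Lemma prob_first_beaten m y i v j : (j < m)%nat -> Rabs (y j - v) < Rabs (y i - v) ->
  prob_first m y i v = 0.
Proof.
  intros Hj H. unfold prob_first, n_closer.
  rewrite (proj2 (Nat.eqb_neq _ 0)); [reflexivity|].
  pose proof (ncount_pos m (fun k => Rltb (Rabs (y k - v)) (Rabs (y i - v))) j Hj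
    (proj2 (Rltb_true _ _) H)). lia.
Qed.

Lemma n_closer_tied m y i v :
  (n_closer m y i v + n_tied m y i v)%nat
  = ncount m (fun j => Rltb (Rabs (y j - v)) (Rabs (y i - v))
                       || Reqb (Rabs (y j - v)) (Rabs (y i - v))).
Proof.
  symmetry. apply ncount_orb. intros j _ E.
  apply Rltb_true in E. apply Reqb_false. lra.
Qed.

Lemma prob_last_farthest m y i v :
  (forall j, (j < m)%nat -> y j <> y i -> Rabs (y j - v) < Rabs (y i - v)) ->
  prob_last m y i v = / INR (nat_pos m y (y i)).
Proof.
  intros H. unfold prob_last.
  rewrite n_closer_tied, ncount_all, Nat.eqb_refl, n_tied_nat_pos; [reflexivity| |].
  - pointwise_lra H.
  - intros j Hj. apply Bool.orb_true_iff.
    destruct (Req_dec (y j) (y i)) as [->|E].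
    + right. now apply Reqb_true.
    + left. apply Rltb_true. auto.
Qed.

Lemma prob_last_beaten m y i v j : (j < m)%nat -> Rabs (y i - v) < Rabs (y j - v) ->
  prob_last m y i v = 0.
Proof.
  intros Hj H. unfold prob_last. rewrite n_closer_tied.
  rewrite (proj2 (Nat.eqb_neq _ m)); [reflexivity|].
  enough (ncount m (fun k => Rltb (Rabs (y k - v)) (Rabs (y i - v))
                             || Reqb (Rabs (y k - v)) (Rabs (y i - v))) < m)%nat by lia.
  apply (ncount_lt _ _ j Hj). apply Bool.orb_false_iff.
  split; [apply Rltb_false|apply Reqb_false]; lra.
Qed.

Lemma is_RInt_prob_first m y i lo hi :
  0 <= lo <= y i -> y i <= hi <= 1 ->
  (forall j, (j < m)%nat -> y j < y i -> (y j + y i) / 2 <= lo) ->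
  (lo = 0 \/ exists j, (j < m)%nat /\ y j < y i /\ lo = (y j + y i) / 2) ->
  (forall j, (j < m)%nat -> y i < y j -> hi <= (y j + y i) / 2) ->
  (hi = 1 \/ exists j, (j < m)%nat /\ y i < y j /\ hi = (y j + y i) / 2) ->
  is_RInt (prob_first m y i) 0 1 ((hi - lo) / INR (nat_pos m y (y i))).
Proof.
  intros Hlo Hhi Hleft Hlo' Hright Hhi'.
  replace ((hi - lo) / INR (nat_pos m y (y i))) with
    (0 * lo + / INR (nat_pos m y (y i)) * (hi - lo) + 0 * (1 - hi)) by (unfold Rdiv; ring).
  apply is_RInt_step3; try lra.
  - intros v Hv. destruct Hlo' as [->|[j [Hj [Hji ->]]]]; [lra|].
    apply (prob_first_beaten _ _ _ _ j); auto. solve_Rabs.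
  - intros v Hv. apply prob_first_nearest. intros j Hj Hne.
    destruct (Rlt_dec (y j) (y i)) as [Hlt|Hge].
    + specialize (Hleft j Hj Hlt). solve_Rabs.
    + assert (Hgt : y i < y j) by lra. specialize (Hright j Hj Hgt). solve_Rabs.
  - intros v Hv. destruct Hhi' as [->|[j [Hj [Hji ->]]]]; [lra|].
    apply (prob_first_beaten _ _ _ _ j); auto. solve_Rabs.
Qed.

Lemma is_RInt_prob_last_leftmost m y i r : (r < m)%nat -> 0 <= y i -> y i < y r -> y r <= 1 ->
  (forall j, (j < m)%nat -> y i <= y j <= y r) ->
  is_RInt (prob_last m y i) 0 1 ((1 - (y i + y r) / 2) / INR (nat_pos m y (y i))).
Proof.
  intros Hr H0 Hir H1 Hall. set (h := (y i + y r) / 2).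
  replace ((1 - h) / INR (nat_pos m y (y i))) with
    (0 * h + 0 * (h - h) + / INR (nat_pos m y (y i)) * (1 - h)) by (unfold Rdiv; ring).
  apply is_RInt_step3; unfold h in *; try lra; intros v Hv; [| lra |].
  - apply (prob_last_beaten _ _ _ _ r); auto. solve_Rabs.
  - apply prob_last_farthest. intros j Hj Hne.
    specialize (Hall j Hj). solve_Rabs.
Qed.

Lemma is_RInt_prob_last_interior m y i l r : (l < m)%nat -> (r < m)%nat ->
  y l < y i < y r -> is_RInt (prob_last m y i) 0 1 0.
Proof.
  intros Hl Hr H. replace 0 with (0 * 0 + 0 * (0 - 0) + 0 * (1 - 0)) at 2 by ring.
  apply is_RInt_step3; try lra; intros v Hv; [lra|lra|].
  destruct (Rle_dec v (y i)).
  - apply (prob_last_beaten _ _ _ _ r); auto. solve_Rabs.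
  - apply (prob_last_beaten _ _ _ _ l); auto. solve_Rabs.
Qed.

Lemma vscore_is_RInt c m y i F G :
  is_RInt (prob_first m y i) 0 1 F -> is_RInt (prob_last m y i) 0 1 G ->
  vscore c m y i = F - c * G.
Proof.
  intros HF HG. apply integral01_is_RInt.
  exact (is_RInt_minus _ _ _ _ _ _ HF (is_RInt_scal _ _ _ c _ HG)).
Qed.

Lemma score_at_refl c m y i v : score_at c m (refl y) i v = score_at c m y i (1 - v).
Proof.
  assert (Habs : forall j, Rabs (refl y j - v) = Rabs (y j - (1 - v))).
  { intros j. unfold refl. rewrite <- Rabs_Ropp. f_equal. ring. }
  unfold score_at. cbv zeta. rewrite !Habs.
  replace (fun j => Rltb (Rabs (refl y j - v)) (Rabs (y i - (1 - v))))
    with (fun j => Rltb (Rabs (y j - (1 - v))) (Rabs (y i - (1 - v))))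
    by (apply functional_extensionality; intros j; now rewrite Habs).
  replace (fun j => Reqb (Rabs (refl y j - v)) (Rabs (y i - (1 - v))))
    with (fun j => Reqb (Rabs (y j - (1 - v))) (Rabs (y i - (1 - v))))
    by (apply functional_extensionality; intros j; now rewrite Habs).
  reflexivity.
Qed.

Lemma vscore_refl c m y i : vscore c m (refl y) i = vscore c m y i.
Proof.
  unfold vscore. rewrite <- (integral01_reflect (score_at c m y i)). f_equal.
  apply functional_extensionality. intros v. apply score_at_refl.
Qed.

Lemma forall_upd (P : R -> Prop) m x i t : P t ->
  (forall j, (j < m)%nat -> j <> i -> P (x j)) -> forall j, (j < m)%nat -> P (upd x i t j).
Proof.
  intros Ht H j Hj. destruct (Nat.eq_dec j i) as [->|Hne].
  - now rewrite upd_eq.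
  - rewrite upd_neq; auto.
Qed.

Lemma vscore_upd_leftmost c m x i t k r a b : (k < m)%nat -> (r < m)%nat -> k <> i -> r <> i ->
  x k = a -> x r = b -> 0 <= t < a -> b <= 1 ->
  (forall j, (j < m)%nat -> j <> i -> x j = t \/ a <= x j <= b) ->
  vscore c m (upd x i t) i
  = ((t + a) / 2 - c * (1 - (t + b) / 2)) / INR (nat_pos m (upd x i t) t).
Proof.
  intros Hk Hr Hki Hri Ha Hb Ht Hb1 Hoth.
  set (y := upd x i t).
  assert (Hy : forall j, (j < m)%nat -> y j = t \/ a <= y j <= b)
    by (apply (forall_upd (fun z => z = t \/ a <= z <= b)); auto).
  assert (Hyi : y i = t) by apply upd_eq.
  assert (Hyk : y k = a) by (unfold y; rewrite upd_neq; auto).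
  assert (Hyr : y r = b) by (unfold y; rewrite upd_neq; auto).
  pose proof (Hy k Hk) as Hak.
  rewrite (vscore_is_RInt c m y i ((((y i + y k) / 2) - 0) / INR (nat_pos m y (y i)))
             ((1 - (y i + y r) / 2) / INR (nat_pos m y (y i)))).
  - rewrite Hyi, Hyk, Hyr. unfold Rdiv. ring.
  - apply is_RInt_prob_first; try lra.
    + intros j Hj Hlt. specialize (Hy j Hj). lra.
    + intros j Hj Hlt. specialize (Hy j Hj). lra.
    + right. exists k. split; [auto|]. split; lra.
  - apply is_RInt_prob_last_leftmost; auto; try lra.
    pointwise_lra Hy.
Qed.

Lemma vscore_upd_interior c m x i t l r a b : (l < m)%nat -> (r < m)%nat -> l <> i -> r <> i ->
  x l = a -> x r = b -> 0 <= a < t -> t < b <= 1 ->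
  (forall j, (j < m)%nat -> j <> i -> x j <= a \/ x j = t \/ b <= x j) ->
  vscore c m (upd x i t) i = ((b - a) / 2) / INR (nat_pos m (upd x i t) t).
Proof.
  intros Hl Hr Hli Hri Ha Hb Hat Htb Hoth.
  set (y := upd x i t).
  assert (Hy : forall j, (j < m)%nat -> y j <= a \/ y j = t \/ b <= y j)
    by (apply (forall_upd (fun z => z <= a \/ z = t \/ b <= z)); auto).
  assert (Hyi : y i = t) by apply upd_eq.
  assert (Hyl : y l = a) by (unfold y; rewrite upd_neq; auto).
  assert (Hyr : y r = b) by (unfold y; rewrite upd_neq; auto).
  rewrite (vscore_is_RInt c m y i
             (((y i + y r) / 2 - (y l + y i) / 2) / INR (nat_pos m y (y i))) 0).
  - rewrite Hyi, Hyl, Hyr. unfold Rdiv. ring.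
  - apply is_RInt_prob_first; try lra.
    + intros j Hj Hlt. specialize (Hy j Hj). lra.
    + right. exists l. split; [auto|]. split; lra.
    + intros j Hj Hlt. specialize (Hy j Hj). lra.
    + right. exists r. split; [auto|]. split; lra.
  - apply (is_RInt_prob_last_interior _ _ _ l r); auto. lra.
Qed.

Lemma vscore_upd_rightmost c m x i t l k a b : (l < m)%nat -> (k < m)%nat -> l <> i -> k <> i ->
  x l = a -> x k = b -> 0 <= a -> b < t <= 1 ->
  (forall j, (j < m)%nat -> j <> i -> x j = t \/ a <= x j <= b) ->
  vscore c m (upd x i t) i
  = ((1 - (b + t) / 2) - c * ((a + t) / 2)) / INR (nat_pos m (upd x i t) t).
Proof.
  intros Hl Hk Hli Hki Ha Hb Ha0 Ht Hoth.
  rewrite <- vscore_refl, refl_upd.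
  rewrite (vscore_upd_leftmost c m (refl x) i (1 - t) k l (1 - b) (1 - a)); auto.
  - rewrite <- refl_upd, nat_pos_refl. replace (1 - (1 - t)) with t by ring.
    f_equal. field.
  - unfold refl. now rewrite Hb.
  - unfold refl. now rewrite Ha.
  - lra.
  - lra.
  - intros j Hj Hne. specialize (Hoth j Hj Hne). unfold refl. lra.
Qed.

Lemma vscore_upd_fresh_left c m x i t k r a b : (i < m)%nat -> (k < m)%nat -> (r < m)%nat ->
  k <> i -> r <> i -> x k = a -> x r = b -> 0 <= t < a -> b <= 1 ->
  (forall j, (j < m)%nat -> j <> i -> a <= x j <= b) ->
  vscore c m (upd x i t) i = (t + a) / 2 - c * (1 - (t + b) / 2).
Proof.
  intros Hi Hk Hr Hki Hri Ha Hb Ht Hb1 Hoth.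
  rewrite (vscore_upd_leftmost c m x i t k r a b), nat_pos_upd_fresh; auto.
  all: try pointwise_lra Hoth.
  simpl. field.
Qed.

Lemma vscore_upd_fresh_gap c m x i t l r a b : (i < m)%nat -> (l < m)%nat -> (r < m)%nat ->
  l <> i -> r <> i -> x l = a -> x r = b -> 0 <= a < t -> t < b <= 1 ->
  (forall j, (j < m)%nat -> j <> i -> x j <= a \/ b <= x j) ->
  vscore c m (upd x i t) i = (b - a) / 2.
Proof.
  intros Hi Hl Hr Hli Hri Ha Hb Hat Htb Hoth.
  rewrite (vscore_upd_interior c m x i t l r a b), nat_pos_upd_fresh; auto.
  all: try pointwise_lra Hoth.
  simpl. field.
Qed.

Lemma vscore_upd_fresh_right c m x i t l k a b : (i < m)%nat -> (l < m)%nat -> (k < m)%nat ->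
  l <> i -> k <> i -> x l = a -> x k = b -> 0 <= a -> b < t <= 1 ->
  (forall j, (j < m)%nat -> j <> i -> a <= x j <= b) ->
  vscore c m (upd x i t) i = (1 - (b + t) / 2) - c * ((a + t) / 2).
Proof.
  intros Hi Hl Hk Hli Hki Ha Hb Ha0 Ht Hoth.
  rewrite (vscore_upd_rightmost c m x i t l k a b), nat_pos_upd_fresh; auto.
  all: try pointwise_lra Hoth.
  simpl. field.
Qed.

Definition best_response c m x i :=
  forall t, 0 <= t <= 1 -> vscore c m (upd x i t) i <= vscore c m x i.

Lemma best_response_refl c m x i : best_response c m x i -> best_response c m (refl x) i.
Proof.
  intros H t Ht.
  replace (upd (refl x) i t) with (refl (upd x i (1 - t)))
    by (rewrite refl_upd; f_equal; ring).
  rewrite !vscore_refl. apply H. lra.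
Qed.

Lemma best_response_of_refl c m x i : best_response c m (refl x) i -> best_response c m x i.
Proof. intros H. rewrite <- (refl_refl x). now apply best_response_refl. Qed.

Lemma NE_best_response c m x : is_NE c m x -> forall i, (i < m)%nat -> best_response c m x i.
Proof. intros [_ H] i Hi t Ht. now apply H. Qed.

Lemma is_NE_of_best_response c m x : is_profile m x ->
  (forall i, (i < m)%nat -> best_response c m x i) -> is_NE c m x.
Proof. intros Hp H. split; auto. intros i t Hi Ht. now apply H. Qed.

Lemma affine_le_right_end (al be v a b : R) : a < b ->
  (forall t, a < t < b -> al * t + be <= v) -> al * b + be <= v.
Proof.
  intros Hab H. destruct (Rle_dec al 0) as [Hal|Hal].
  - specialize (H ((a + b) / 2) ltac:(lra)).
    assert (al * b <= al * ((a + b) / 2)) by (apply Rmult_le_compat_neg_l; lra). lra.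
  - apply Rnot_lt_le. intros Hlt.
    set (t := Rmax ((a + b) / 2) (b - (al * b + be - v) / (2 * al))).
    assert (Ht1 : (a + b) / 2 <= t) by apply Rmax_l.
    assert (Ht2 : b - (al * b + be - v) / (2 * al) <= t) by apply Rmax_r.
    assert (Htb : t < b).
    { unfold t, Rmax. destruct Rle_dec; [|lra].
      enough (0 < (al * b + be - v) / (2 * al)) by lra.
      apply Rdiv_lt_0_compat; lra. }
    specialize (H t ltac:(lra)).
    assert (al * (b - t) <= (al * b + be - v) / 2).
    { replace ((al * b + be - v) / 2) with (al * ((al * b + be - v) / (2 * al))) by (field; lra).
      apply Rmult_le_compat_l; lra. }
    lra.
Qed.

Lemma best_response_gap c m x i l r a b : (i < m)%nat -> (l < m)%nat -> (r < m)%nat ->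
  l <> i -> r <> i -> x l = a -> x r = b -> 0 <= a < b -> b <= 1 ->
  (forall j, (j < m)%nat -> j <> i -> x j <= a \/ b <= x j) ->
  best_response c m x i -> (b - a) / 2 <= vscore c m x i.
Proof.
  intros Hi Hl Hr Hli Hri Ha Hb Hab Hb1 Hoth Hbr.
  rewrite <- (vscore_upd_fresh_gap c m x i ((a + b) / 2) l r a b); auto; try lra.
  apply Hbr. lra.
Qed.

Lemma best_response_left_end c m x i k r a b : (i < m)%nat -> (k < m)%nat -> (r < m)%nat ->
  k <> i -> r <> i -> x k = a -> x r = b -> 0 < a -> b <= 1 ->
  (forall j, (j < m)%nat -> j <> i -> a <= x j <= b) ->
  best_response c m x i -> a - c * (1 - (a + b) / 2) <= vscore c m x i.
Proof.
  intros Hi Hk Hr Hki Hri Ha Hb Ha0 Hb1 Hoth Hbr.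
  pose proof (Hoth r Hr Hri) as Hab.
  (* Deviating to [t < a] earns [(t + a) / 2 - c * (1 - (t + b) / 2)]; let [t] tend to [a]. *)
  replace (a - c * (1 - (a + b) / 2)) with ((1 + c) / 2 * a + (a / 2 - c * (1 - b / 2))) by field.
  apply (affine_le_right_end _ _ _ 0); auto. intros t Ht.
  replace ((1 + c) / 2 * t + (a / 2 - c * (1 - b / 2))) with
    ((t + a) / 2 - c * (1 - (t + b) / 2)) by field.
  rewrite <- (vscore_upd_fresh_left c m x i t k r a b); auto; try lra.
  apply Hbr. lra.
Qed.

Lemma best_response_right_end c m x i l k a b : (i < m)%nat -> (l < m)%nat -> (k < m)%nat ->
  l <> i -> k <> i -> x l = a -> x k = b -> 0 <= a -> b < 1 ->
  (forall j, (j < m)%nat -> j <> i -> a <= x j <= b) ->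
  best_response c m x i -> 1 - b - c * ((a + b) / 2) <= vscore c m x i.
Proof.
  intros Hi Hl Hk Hli Hki Ha Hb Ha0 Hb1 Hoth Hbr.
  rewrite <- vscore_refl.
  replace (1 - b - c * ((a + b) / 2)) with ((1 - b) - c * (1 - ((1 - b) + (1 - a)) / 2)) by field.
  apply (best_response_left_end c m (refl x) i k l); auto; try lra.
  - unfold refl. now rewrite Hb.
  - unfold refl. now rewrite Ha.
  - intros j Hj Hne. specialize (Hoth j Hj Hne). unfold refl. lra.
  - now apply best_response_refl.
Qed.

Lemma ex_argmin m (x : nat -> R) (P : nat -> Prop) : (exists j, (j < m)%nat /\ P j) ->
  exists k, (k < m)%nat /\ P k /\ forall j, (j < m)%nat -> P j -> x k <= x j.
Proof.
  induction m as [|m IH]; intros [j [Hj Pj]]; [lia|].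
  destruct (classic (exists j, (j < m)%nat /\ P j)) as [Hex|Hno].
  - destruct (IH Hex) as [k [Hk [Pk Hmin]]].
    destruct (classic (P m /\ x m < x k)) as [[Pm Hlt]|Hnot].
    + exists m. repeat split; auto. intros j' Hj' Pj'.
      destruct (Nat.eq_dec j' m) as [->|Hne]; [lra|]. specialize (Hmin j' ltac:(lia) Pj'). lra.
    + exists k. repeat split; [lia|auto|]. intros j' Hj' Pj'.
      destruct (Nat.eq_dec j' m) as [->|Hne]; [|apply Hmin; auto; lia].
      apply Rnot_lt_le. intros Hlt. auto.
  - assert (j = m) as -> by (apply NNPP; intros Hne; apply Hno; exists j; split; auto; lia).
    exists m. repeat split; auto. intros j' Hj' Pj'.
    destruct (Nat.eq_dec j' m) as [->|Hne]; [lra|]. exfalso. apply Hno. exists j'; split; auto; lia.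
Qed.

Lemma ex_argmax m (x : nat -> R) (P : nat -> Prop) : (exists j, (j < m)%nat /\ P j) ->
  exists k, (k < m)%nat /\ P k /\ forall j, (j < m)%nat -> P j -> x j <= x k.
Proof.
  intros H. destruct (ex_argmin m (fun j => - x j) P H) as [k [Hk [Pk Hmin]]].
  exists k. repeat split; auto. intros j Hj Pj. specialize (Hmin j Hj Pj). lra.
Qed.

(* Alone at the left end, moving halfway towards the nearest other candidate pays strictly more. *)
Lemma best_response_leftmost_shared c m x i r : 0 <= c -> (i < m)%nat -> (r < m)%nat ->
  0 <= x i -> x i < x r -> x r <= 1 -> (forall j, (j < m)%nat -> x i <= x j <= x r) ->
  best_response c m x i -> exists j, (j < m)%nat /\ j <> i /\ x j = x i.
Proof.
  intros Hc Hi Hr Hi0 Hir Hr1 Hall Hbr. apply NNPP. intros Hno.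
  assert (Hright : forall j, (j < m)%nat -> j <> i -> x i < x j).
  { intros j Hj Hne. destruct (Hall j Hj) as [[Hlt|Heq] _]; auto. exfalso; eauto. }
  assert (Hri : r <> i) by (intros ->; lra).
  destruct (ex_argmin m x (fun j => j <> i)) as [k [Hk [Hki Hmin]]]; [eauto|].
  pose proof (Hright k Hk Hki) as Hik.
  assert (Hpay : forall t, 0 <= t < x k ->
            vscore c m (upd x i t) i = (t + x k) / 2 - c * (1 - (t + x r) / 2)).
  { intros t Ht. apply (vscore_upd_fresh_left c m x i t k r); auto; try lra.
    intros j Hj Hne. specialize (Hmin j Hj Hne). specialize (Hall j Hj). lra. }
  pose proof (Hbr ((x i + x k) / 2) ltac:(pose proof (Hall k Hk); lra)) as Hdev.
  rewrite Hpay in Hdev by lra.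
  pose proof (Hpay (x i) ltac:(lra)) as Hcur. rewrite upd_same in Hcur.
  rewrite Hcur in Hdev. nra.
Qed.

Lemma best_response_rightmost_shared c m x l i : 0 <= c -> (l < m)%nat -> (i < m)%nat ->
  0 <= x l -> x l < x i -> x i <= 1 -> (forall j, (j < m)%nat -> x l <= x j <= x i) ->
  best_response c m x i -> exists j, (j < m)%nat /\ j <> i /\ x j = x i.
Proof.
  intros Hc Hl Hi Hl0 Hli Hi1 Hall Hbr.
  destruct (best_response_leftmost_shared c m (refl x) i l) as [j [Hj [Hji E]]]; auto;
    unfold refl in *; try lra.
  - pointwise_lra Hall.
  - apply (best_response_refl _ _ _ _ Hbr).
  - exists j. split; [auto|]. split; [auto|]. lra.
Qed.

Lemma vscore_leftmost c m x i k r : (i < m)%nat -> (k < m)%nat -> (r < m)%nat ->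
  0 <= x i < x k -> x r <= 1 ->
  (forall j, (j < m)%nat -> x j = x i \/ x k <= x j <= x r) ->
  vscore c m x i = ((x i + x k) / 2 - c * (1 - (x i + x r) / 2)) / INR (nat_pos m x (x i)).
Proof.
  intros Hi Hk Hr Hik Hr1 Hall.
  pose proof (Hall k Hk). pose proof (Hall r Hr).
  rewrite <- (upd_same x i) at 1.
  rewrite (vscore_upd_leftmost c m x i (x i) k r (x k) (x r)), upd_same; auto; try lra;
    intros ->; lra.
Qed.

Lemma vscore_rightmost c m x i l k : (i < m)%nat -> (l < m)%nat -> (k < m)%nat ->
  0 <= x l -> x k < x i <= 1 ->
  (forall j, (j < m)%nat -> x j = x i \/ x l <= x j <= x k) ->
  vscore c m x i = ((1 - (x k + x i) / 2) - c * ((x l + x i) / 2)) / INR (nat_pos m x (x i)).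
Proof.
  intros Hi Hl Hk Hl0 Hki Hall. pose proof (Hall k Hk). pose proof (Hall l Hl).
  rewrite <- (upd_same x i) at 1.
  rewrite (vscore_upd_rightmost c m x i (x i) l k (x l) (x k)), upd_same; auto; try lra;
    intros ->; lra.
Qed.

Lemma vscore_interior c m x i l r : (i < m)%nat -> (l < m)%nat -> (r < m)%nat ->
  0 <= x l < x i -> x i < x r <= 1 ->
  (forall j, (j < m)%nat -> x j <= x l \/ x j = x i \/ x r <= x j) ->
  vscore c m x i = ((x r - x l) / 2) / INR (nat_pos m x (x i)).
Proof.
  intros Hi Hl Hr Hli Hir Hall.
  rewrite <- (upd_same x i) at 1.
  rewrite (vscore_upd_interior c m x i (x i) l r (x l) (x r)), upd_same; auto; try lra;
    intros ->; lra.
Qed.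

Lemma two_groups_left_constraints c m x a b i j r : (i < m)%nat -> (j < m)%nat -> (r < m)%nat ->
  i <> j -> x i = a -> x j = a -> x r = b -> 0 <= a < b -> b <= 1 ->
  (forall k, (k < m)%nat -> x k = a \/ x k = b) -> best_response c m x i ->
  vscore c m x i = ((a + b) / 2 - c * (1 - (a + b) / 2)) / INR (nat_pos m x a) /\
  (b - a) / 2 <= vscore c m x i /\
  (0 < a -> a - c * (1 - (a + b) / 2) <= vscore c m x i) /\
  (b < 1 -> 1 - b - c * ((a + b) / 2) <= vscore c m x i).
Proof.
  intros Hi Hj Hr Hij Hxi Hxj Hxr Hab Hb1 Hall Hbr.
  assert (Hri : r <> i) by (intros ->; lra).
  assert (Hoth : forall k, (k < m)%nat -> k <> i -> x k = a \/ x k = b) by auto.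
  split; [|split; [|split]].
  - rewrite (vscore_leftmost c m x i r r), Hxi, Hxr; auto; try lra.
    pointwise_lra Hall.
  - apply (best_response_gap c m x i j r); auto; try lra.
    pointwise_lra Hoth.
  - intros Ha0. apply (best_response_left_end c m x i j r); auto; try lra.
    pointwise_lra Hoth.
  - intros Hb1'. apply (best_response_right_end c m x i j r); auto; try lra.
    pointwise_lra Hoth.
Qed.

Lemma two_groups_right_constraints c m x a b l r j : (l < m)%nat -> (r < m)%nat -> (j < m)%nat ->
  r <> j -> x l = a -> x r = b -> x j = b -> 0 <= a < b -> b <= 1 ->
  (forall k, (k < m)%nat -> x k = a \/ x k = b) -> best_response c m x r ->
  vscore c m x r = ((1 - (a + b) / 2) - c * ((a + b) / 2)) / INR (nat_pos m x b) /\
  (b - a) / 2 <= vscore c m x r /\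
  (0 < a -> a - c * (1 - (a + b) / 2) <= vscore c m x r) /\
  (b < 1 -> 1 - b - c * ((a + b) / 2) <= vscore c m x r).
Proof.
  intros Hl Hr Hj Hrj Hxl Hxr Hxj Hab Hb1 Hall Hbr.
  assert (Hlr : l <> r) by (intros ->; lra).
  assert (Hoth : forall k, (k < m)%nat -> k <> r -> x k = a \/ x k = b) by auto.
  split; [|split; [|split]].
  - rewrite (vscore_rightmost c m x r l l), Hxl, Hxr; auto; try lra.
    pointwise_lra Hall.
  - apply (best_response_gap c m x r l j); auto; try lra.
    pointwise_lra Hoth.
  - intros Ha0. apply (best_response_left_end c m x r l j); auto; try lra.
    pointwise_lra Hoth.
  - intros Hb1'. apply (best_response_right_end c m x r l j); auto; try lra.
    pointwise_lra Hoth.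
Qed.

Lemma three_groups_left_constraints c m x a d b i j s r :
  (i < m)%nat -> (j < m)%nat -> (s < m)%nat -> (r < m)%nat ->
  i <> j -> x i = a -> x j = a -> x s = d -> x r = b -> 0 <= a < d -> d < b <= 1 ->
  (forall k, (k < m)%nat -> x k = a \/ x k = d \/ x k = b) -> best_response c m x i ->
  vscore c m x i = ((a + d) / 2 - c * (1 - (a + b) / 2)) / INR (nat_pos m x a) /\
  (d - a) / 2 <= vscore c m x i /\ (b - d) / 2 <= vscore c m x i /\
  (0 < a -> a - c * (1 - (a + b) / 2) <= vscore c m x i).
Proof.
  intros Hi Hj Hs Hr Hij Hxi Hxj Hxs Hxr Had Hdb Hall Hbr.
  assert (Hsi : s <> i) by (intros ->; lra).
  assert (Hri : r <> i) by (intros ->; lra).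
  assert (Hoth : forall k, (k < m)%nat -> k <> i -> x k = a \/ x k = d \/ x k = b) by auto.
  split; [|split; [|split]].
  - rewrite (vscore_leftmost c m x i s r), Hxi, Hxs, Hxr; auto; try lra.
    pointwise_lra Hall.
  - apply (best_response_gap c m x i j s); auto; try lra.
    pointwise_lra Hoth.
  - apply (best_response_gap c m x i s r); auto; try lra.
    pointwise_lra Hoth.
  - intros Ha0. apply (best_response_left_end c m x i j r); auto; try lra.
    pointwise_lra Hoth.
Qed.

Lemma three_groups_right_constraints c m x a d b l s r j :
  (l < m)%nat -> (s < m)%nat -> (r < m)%nat -> (j < m)%nat ->
  r <> j -> x l = a -> x s = d -> x r = b -> x j = b -> 0 <= a < d -> d < b <= 1 ->
  (forall k, (k < m)%nat -> x k = a \/ x k = d \/ x k = b) -> best_response c m x r ->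
  vscore c m x r = ((1 - (d + b) / 2) - c * ((a + b) / 2)) / INR (nat_pos m x b) /\
  (d - a) / 2 <= vscore c m x r /\ (b - d) / 2 <= vscore c m x r /\
  (b < 1 -> 1 - b - c * ((a + b) / 2) <= vscore c m x r).
Proof.
  intros Hl Hs Hr Hj Hrj Hxl Hxs Hxr Hxj Had Hdb Hall Hbr.
  assert (Hlr : l <> r) by (intros ->; lra).
  assert (Hsr : s <> r) by (intros ->; lra).
  assert (Hoth : forall k, (k < m)%nat -> k <> r -> x k = a \/ x k = d \/ x k = b) by auto.
  split; [|split; [|split]].
  - rewrite (vscore_rightmost c m x r l s), Hxl, Hxs, Hxr; auto; try lra.
    pointwise_lra Hall.
  - apply (best_response_gap c m x r l s); auto; try lra.
    pointwise_lra Hoth.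
  - apply (best_response_gap c m x r s j); auto; try lra.
    pointwise_lra Hoth.
  - intros Hb1'. apply (best_response_right_end c m x r l j); auto; try lra.
    pointwise_lra Hoth.
Qed.

Lemma two_pairs_inequalities_solution c a b vL vR : 0 <= c < 1 -> 0 <= a < b -> b <= 1 ->
  vL = ((a + b) / 2 - c * (1 - (a + b) / 2)) / 2 ->
  vR = ((1 - (a + b) / 2) - c * ((a + b) / 2)) / 2 ->
  (b - a) / 2 <= vL -> (0 < a -> a - c * (1 - (a + b) / 2) <= vL) ->
  (b - a) / 2 <= vR -> (b < 1 -> 1 - b - c * ((a + b) / 2) <= vR) ->
  a = (1 + c) / 4 /\ b = 1 - (1 + c) / 4.
Proof.
  intros Hc Hab Hb1 -> -> gapL leftL gapR rightR.
  assert (Ha0 : 0 < a) by (destruct (Req_dec a 0) as [->|]; [nra|lra]).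
  assert (Hb1' : b < 1) by (destruct (Req_dec b 1) as [->|]; [nra|lra]).
  specialize (leftL Ha0). specialize (rightR Hb1').
  assert (Hd : b - a = (1 - c) / 2) by nra.
  assert (Hs : a + b = 1) by nra.
  split; lra.
Qed.

Lemma pair_triple_inequalities_infeasible c a b nL nR vL vR : 0 <= c < 1 -> 0 <= a < b -> b <= 1 ->
  (nL = 2 /\ nR = 3) \/ (nL = 3 /\ nR = 2) ->
  vL = ((a + b) / 2 - c * (1 - (a + b) / 2)) / nL ->
  vR = ((1 - (a + b) / 2) - c * ((a + b) / 2)) / nR ->
  (b - a) / 2 <= vL -> (0 < a -> a - c * (1 - (a + b) / 2) <= vL) ->
  (b < 1 -> 1 - b - c * ((a + b) / 2) <= vL) ->
  (b - a) / 2 <= vR -> (0 < a -> a - c * (1 - (a + b) / 2) <= vR) ->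
  (b < 1 -> 1 - b - c * ((a + b) / 2) <= vR) -> False.
Proof.
  intros Hc Hab Hb1 Hn -> -> gapL leftL rightL gapR leftR rightR.
  destruct Hn as [[-> ->]|[-> ->]].
  - assert (Ha0 : 0 < a) by (destruct (Req_dec a 0) as [->|]; [nra|lra]).
    specialize (leftL Ha0). specialize (leftR Ha0).
    destruct (Req_dec b 1) as [->|Hb]; [nra|].
    specialize (rightL ltac:(lra)). specialize (rightR ltac:(lra)). nra.
  - assert (Hb1' : b < 1) by (destruct (Req_dec b 1) as [->|]; [nra|lra]).
    specialize (rightL Hb1'). specialize (rightR Hb1').
    destruct (Req_dec a 0) as [->|Ha]; [nra|].
    specialize (leftL ltac:(lra)). specialize (leftR ltac:(lra)). nra.
Qed.

Lemma pair_single_pair_inequalities_solution c a d b vL vR :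
  0 <= c < 1 -> 0 <= a < d -> d < b <= 1 ->
  vL = ((a + d) / 2 - c * (1 - (a + b) / 2)) / 2 ->
  vR = ((1 - (d + b) / 2) - c * ((a + b) / 2)) / 2 ->
  (d - a) / 2 <= vL -> (b - d) / 2 <= vL -> (0 < a -> a - c * (1 - (a + b) / 2) <= vL) ->
  (d - a) / 2 <= vR -> (b - d) / 2 <= vR -> (b < 1 -> 1 - b - c * ((a + b) / 2) <= vR) ->
  a = (1 + 2 * c) / 6 /\ d = 1 / 2 /\ b = 1 - (1 + 2 * c) / 6.
Proof.
  intros Hc Had Hdb -> -> gapL1 gapL2 leftL gapR1 gapR2 rightR.
  assert (Ha0 : 0 < a) by (destruct (Req_dec a 0) as [->|]; [nra|lra]).
  assert (Hb1 : b < 1) by (destruct (Req_dec b 1) as [->|]; [nra|lra]).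
  specialize (leftL Ha0). specialize (rightR Hb1).
  assert (Hw : b - a = 2 * (1 - c) / 3) by nra.
  assert (Hd : 2 * d = a + b) by nra.
  assert (Hs : a + b = 1) by nra.
  lra.
Qed.

Lemma INR_2 : INR 2 = 2. Proof. simpl; ring. Qed.

Lemma INR_3 : INR 3 = 3. Proof. simpl; ring. Qed.

Lemma two_pairs_NE_positions c m x a b l l' r r' : 0 <= c < 1 -> is_NE c m x ->
  (l < m)%nat -> (l' < m)%nat -> (r < m)%nat -> (r' < m)%nat -> l' <> l -> r' <> r ->
  x l = a -> x l' = a -> x r = b -> x r' = b -> a < b ->
  (forall j, (j < m)%nat -> x j = a \/ x j = b) ->
  nat_pos m x a = 2%nat -> nat_pos m x b = 2%nat ->
  a = (1 + c) / 4 /\ b = 1 - (1 + c) / 4.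
Proof.
  intros Hc HNE Hl Hl' Hr Hr' Hl'l Hr'r El El' Er Er' Hab Hcover Na Nb.
  pose proof (NE_best_response c m x HNE) as Hbr. destruct HNE as [Hprof _].
  pose proof (Hprof l Hl). pose proof (Hprof r Hr).
  destruct (two_groups_left_constraints c m x a b l l' r) as (HvL & gapL & leftL & _);
    auto; try lra.
  destruct (two_groups_right_constraints c m x a b l r r') as (HvR & gapR & _ & rightR);
    auto; try lra.
  rewrite Na, INR_2 in HvL. rewrite Nb, INR_2 in HvR.
  apply (two_pairs_inequalities_solution c a b _ _ Hc ltac:(lra) ltac:(lra) HvL HvR); auto.
Qed.

Lemma pair_triple_not_NE c m x a b l l' r r' : 0 <= c < 1 -> is_NE c m x ->
  (l < m)%nat -> (l' < m)%nat -> (r < m)%nat -> (r' < m)%nat -> l' <> l -> r' <> r ->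
  x l = a -> x l' = a -> x r = b -> x r' = b -> a < b ->
  (forall j, (j < m)%nat -> x j = a \/ x j = b) ->
  (nat_pos m x a = 2 /\ nat_pos m x b = 3 \/ nat_pos m x a = 3 /\ nat_pos m x b = 2)%nat ->
  False.
Proof.
  intros Hc HNE Hl Hl' Hr Hr' Hl'l Hr'r El El' Er Er' Hab Hcover Hn.
  pose proof (NE_best_response c m x HNE) as Hbr. destruct HNE as [Hprof _].
  pose proof (Hprof l Hl). pose proof (Hprof r Hr).
  destruct (two_groups_left_constraints c m x a b l l' r) as (HvL & gapL & leftL & rightL);
    auto; try lra.
  destruct (two_groups_right_constraints c m x a b l r r') as (HvR & gapR & leftR & rightR);
    auto; try lra.
  refine (pair_triple_inequalities_infeasible c a b _ _ _ _ Hc ltac:(lra) ltac:(lra) _ HvL HvR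
            gapL leftL rightL gapR leftR rightR).
  destruct Hn as [[-> ->]|[-> ->]]; [left|right]; rewrite INR_2, INR_3; auto.
Qed.

Lemma pair_single_pair_NE_positions c m x a d b l l' s r r' : 0 <= c < 1 -> is_NE c m x ->
  (l < m)%nat -> (l' < m)%nat -> (s < m)%nat -> (r < m)%nat -> (r' < m)%nat ->
  l' <> l -> r' <> r -> x l = a -> x l' = a -> x s = d -> x r = b -> x r' = b ->
  a < d < b -> (forall j, (j < m)%nat -> x j = a \/ x j = d \/ x j = b) ->
  nat_pos m x a = 2%nat -> nat_pos m x b = 2%nat ->
  a = (1 + 2 * c) / 6 /\ d = 1 / 2 /\ b = 1 - (1 + 2 * c) / 6.
Proof.
  intros Hc HNE Hl Hl' Hs Hr Hr' Hl'l Hr'r El El' Es Er Er' Hadb Hcover Na Nb.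
  pose proof (NE_best_response c m x HNE) as Hbr. destruct HNE as [Hprof _].
  pose proof (Hprof l Hl). pose proof (Hprof r Hr).
  destruct (three_groups_left_constraints c m x a d b l l' s r)
    as (HvL & gapL1 & gapL2 & leftL); auto; try lra.
  destruct (three_groups_right_constraints c m x a d b l s r r')
    as (HvR & gapR1 & gapR2 & rightR); auto; try lra.
  rewrite Na, INR_2 in HvL. rewrite Nb, INR_2 in HvR.
  apply (pair_single_pair_inequalities_solution c a d b _ _ Hc ltac:(lra) ltac:(lra) HvL HvR); auto.
Qed.

Lemma NCNE_shared_extremes c m x : 0 <= c -> is_NCNE c m x ->
  exists l l' r r', (l < m)%nat /\ (l' < m)%nat /\ (r < m)%nat /\ (r' < m)%nat /\
    l' <> l /\ r' <> r /\ x l' = x l /\ x r' = x r /\ x l < x r /\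
    forall j, (j < m)%nat -> x l <= x j <= x r.
Proof.
  intros Hc [HNE [i [j [Hi [Hj Hij]]]]].
  destruct (ex_argmin m x (fun _ => True)) as [l [Hl [_ Hmin]]]; [eauto|].
  destruct (ex_argmax m x (fun _ => True)) as [r [Hr [_ Hmax]]]; [eauto|].
  assert (Hbound : forall k, (k < m)%nat -> x l <= x k <= x r) by (split; auto).
  assert (Hlr : x l < x r).
  { destruct (Hbound i Hi), (Hbound j Hj). destruct (Req_dec (x l) (x r)); [|lra].
    exfalso. apply Hij. lra. }
  pose proof (proj1 HNE l Hl). pose proof (proj1 HNE r Hr).
  destruct (best_response_leftmost_shared c m x l r) as [l' [Hl' [Hl'l El']]];
    auto; try lra; [now apply NE_best_response|].
  destruct (best_response_rightmost_shared c m x l r) as [r' [Hr' [Hr'r Er']]];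
    auto; try lra; [now apply NE_best_response|].
  exists l, l', r, r'. repeat split; auto.
Qed.

Lemma NCNE4_positions c x : 0 <= c < 1 -> is_NCNE c 4 x ->
  nat_pos 4 x ((1 + c) / 4) = 2%nat /\ nat_pos 4 x (1 - (1 + c) / 4) = 2%nat.
Proof.
  intros Hc HN.
  destruct (NCNE_shared_extremes c 4 x ltac:(lra) HN)
    as (l & l' & r & r' & Hl & Hl' & Hr & Hr' & Hl'l & Hr'r & El' & Er' & Hlr & _).
  pose proof (nat_pos_ge2 4 x (x l) l l' Hl Hl' (not_eq_sym Hl'l) eq_refl El').
  pose proof (nat_pos_ge2 4 x (x r) r r' Hr Hr' (not_eq_sym Hr'r) eq_refl Er').
  pose proof (ncount_le 4 (fun j => Reqb (x j) (x l) || Reqb (x j) (x r))) as Hle.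
  rewrite nat_pos_add2 in Hle by lra.
  assert (Na : nat_pos 4 x (x l) = 2%nat) by lia.
  assert (Nb : nat_pos 4 x (x r) = 2%nat) by lia.
  pose proof (nat_pos_cover2 4 x (x l) (x r) ltac:(lra) ltac:(lia)) as Hcover.
  destruct (two_pairs_NE_positions c 4 x (x l) (x r) l l' r r') as [Ea Eb];
    auto; [apply HN|].
  rewrite <- Eb, <- Ea. auto.
Qed.

Lemma NCNE5_positions c x : 0 <= c < 1 -> is_NCNE c 5 x ->
  nat_pos 5 x ((1 + 2 * c) / 6) = 2%nat /\ nat_pos 5 x (1 / 2) = 1%nat /\
  nat_pos 5 x (1 - (1 + 2 * c) / 6) = 2%nat.
Proof.
  intros Hc HN.
  destruct (NCNE_shared_extremes c 5 x ltac:(lra) HN)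
    as (l & l' & r & r' & Hl & Hl' & Hr & Hr' & Hl'l & Hr'r & El' & Er' & Hlr & Hbound).
  pose proof (nat_pos_ge2 5 x (x l) l l' Hl Hl' (not_eq_sym Hl'l) eq_refl El').
  pose proof (nat_pos_ge2 5 x (x r) r r' Hr Hr' (not_eq_sym Hr'r) eq_refl Er').
  pose proof (ncount_le 5 (fun j => Reqb (x j) (x l) || Reqb (x j) (x r))) as Hle.
  rewrite nat_pos_add2 in Hle by lra.
  destruct (Nat.eq_dec (nat_pos 5 x (x l) + nat_pos 5 x (x r)) 5) as [Hfull|Hpart].
  - exfalso. apply (pair_triple_not_NE c 5 x (x l) (x r) l l' r r'); auto; [apply HN| |lia].
    exact (nat_pos_cover2 5 x (x l) (x r) ltac:(lra) Hfull).
  - destruct (nat_pos_outside2 5 x (x l) (x r) ltac:(lra) ltac:(lia)) as [s [Hs [Hsl Hsr]]].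
    pose proof (Hbound s Hs). pose proof (nat_pos_pos 5 x s Hs).
    pose proof (ncount_le 5 (fun j => Reqb (x j) (x l) || Reqb (x j) (x s) || Reqb (x j) (x r)))
      as Hle3.
    rewrite nat_pos_add3 in Hle3 by lra.
    assert (Na : nat_pos 5 x (x l) = 2%nat) by lia.
    assert (Nd : nat_pos 5 x (x s) = 1%nat) by lia.
    assert (Nb : nat_pos 5 x (x r) = 2%nat) by lia.
    pose proof (nat_pos_cover3 5 x (x l) (x s) (x r) ltac:(lra) ltac:(lra) ltac:(lra) ltac:(lia))
      as Hcover.
    destruct (pair_single_pair_NE_positions c 5 x (x l) (x s) (x r) l l' s r r')
      as (Ea & Ed & Eb); auto; [apply HN|lra|].
    rewrite <- Eb, <- Ea, <- Ed. auto.
Qed.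

Lemma two_pairs_left_best_response c m x i p : 0 <= c < 1 -> p = (1 + c) / 4 ->
  (forall j, (j < m)%nat -> x j = p \/ x j = 1 - p) ->
  nat_pos m x p = 2%nat -> nat_pos m x (1 - p) = 2%nat -> (i < m)%nat -> x i = p ->
  best_response c m x i.
Proof.
  intros Hc Hp Hall Np Nq Hi Hxi.
  destruct (nat_pos_other m x i Hi ltac:(rewrite Hxi; lia)) as [j [Hj [Hji Ej]]].
  destruct (nat_pos_witness m x (1 - p) ltac:(lia)) as [r [Hr Er]].
  assert (Hri : r <> i) by (intros ->; lra).
  assert (Hoth : forall k, (k < m)%nat -> k <> i -> x k = p \/ x k = 1 - p) by auto.
  assert (Hcur : vscore c m x i = (1 - c) / 4).
  { rewrite (vscore_leftmost c m x i r r), Hxi, Np, Er, INR_2; auto; try lra.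
    pointwise_lra Hall. }
  intros t Ht. rewrite Hcur.
  destruct (Rtotal_order t p) as [Hlt|[->|Hgt]].
  - rewrite (vscore_upd_fresh_left c m x i t j r p (1 - p)); auto; try nra.
    pointwise_lra Hoth.
  - rewrite <- Hxi, upd_same. lra.
  - destruct (Rtotal_order t (1 - p)) as [Hlt|[->|Hgt']].
    + rewrite (vscore_upd_fresh_gap c m x i t j r p (1 - p)); auto; try lra.
      pointwise_lra Hoth.
    + rewrite (vscore_upd_rightmost c m x i (1 - p) j j p p), nat_pos_upd_join, Nq, INR_3;
        auto; try lra.
      pointwise_lra Hoth.
    + rewrite (vscore_upd_fresh_right c m x i t j r p (1 - p)); auto; try nra.
      pointwise_lra Hoth.
Qed.

Lemma pair_single_pair_left_best_response c m x i p : 0 <= c < 1 -> p = (1 + 2 * c) / 6 ->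
  (forall j, (j < m)%nat -> x j = p \/ x j = 1 / 2 \/ x j = 1 - p) ->
  nat_pos m x p = 2%nat -> nat_pos m x (1 / 2) = 1%nat -> nat_pos m x (1 - p) = 2%nat ->
  (i < m)%nat -> x i = p -> best_response c m x i.
Proof.
  intros Hc Hp Hall Np Nh Nq Hi Hxi.
  destruct (nat_pos_other m x i Hi ltac:(rewrite Hxi; lia)) as [j [Hj [Hji Ej]]].
  destruct (nat_pos_witness m x (1 / 2) ltac:(lia)) as [s [Hs Es]].
  destruct (nat_pos_witness m x (1 - p) ltac:(lia)) as [r [Hr Er]].
  assert (Hsi : s <> i) by (intros ->; lra).
  assert (Hri : r <> i) by (intros ->; lra).
  assert (Hoth : forall k, (k < m)%nat -> k <> i -> x k = p \/ x k = 1 / 2 \/ x k = 1 - p)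
    by auto.
  assert (Hcur : vscore c m x i = (1 - c) / 6).
  { rewrite (vscore_leftmost c m x i s r), Hxi, Np, Es, Er, INR_2; auto; try lra.
    pointwise_lra Hall. }
  intros t Ht. rewrite Hcur.
  destruct (Rtotal_order t p) as [Hlt|[->|Hgt]].
  - rewrite (vscore_upd_fresh_left c m x i t j r p (1 - p)); auto; try nra.
    pointwise_lra Hoth.
  - rewrite <- Hxi, upd_same. lra.
  - destruct (Rtotal_order t (1 / 2)) as [Hlt|[->|Hgt']].
    + rewrite (vscore_upd_fresh_gap c m x i t j s p (1 / 2)); auto; try lra.
      pointwise_lra Hoth.
    + rewrite (vscore_upd_interior c m x i (1 / 2) j r p (1 - p)), nat_pos_upd_join, Nh, INR_2;
        auto; try lra.
      pointwise_lra Hoth.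
    + destruct (Rtotal_order t (1 - p)) as [Hlt|[->|Hgt'']].
      * rewrite (vscore_upd_fresh_gap c m x i t s r (1 / 2) (1 - p)); auto; try lra.
        pointwise_lra Hoth.
      * rewrite (vscore_upd_rightmost c m x i (1 - p) j s p (1 / 2)), nat_pos_upd_join, Nq, INR_3;
          auto; try lra.
        pointwise_lra Hoth.
      * rewrite (vscore_upd_fresh_right c m x i t j r p (1 - p)); auto; try nra.
        pointwise_lra Hoth.
Qed.

Lemma pair_single_pair_middle_best_response c m x i p : 0 <= c < 1 -> p = (1 + 2 * c) / 6 ->
  (forall j, (j < m)%nat -> x j = p \/ x j = 1 / 2 \/ x j = 1 - p) ->
  nat_pos m x p = 2%nat -> nat_pos m x (1 / 2) = 1%nat -> nat_pos m x (1 - p) = 2%nat ->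
  (i < m)%nat -> x i = 1 / 2 -> best_response c m x i.
Proof.
  intros Hc Hp Hall Np Nh Nq Hi Hxi.
  destruct (nat_pos_witness m x p ltac:(lia)) as [l [Hl El]].
  destruct (nat_pos_witness m x (1 - p) ltac:(lia)) as [r [Hr Er]].
  assert (Hli : l <> i) by (intros ->; lra).
  assert (Hri : r <> i) by (intros ->; lra).
  assert (Hoth : forall k, (k < m)%nat -> k <> i -> x k = p \/ x k = 1 - p).
  { intros k Hk Hne. destruct (Hall k Hk) as [E|[E|E]]; auto. exfalso.
    pose proof (nat_pos_ge2 m x (1 / 2) i k Hi Hk (not_eq_sym Hne) Hxi E). lia. }
  assert (Hcur : vscore c m x i = (1 - c) / 3).
  { rewrite (vscore_interior c m x i l r), Hxi, Nh, El, Er; auto; try lra.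
    - rewrite Hp. simpl. field.
    - pointwise_lra Hall. }
  intros t Ht. rewrite Hcur.
  destruct (Rtotal_order t p) as [Hlt|[->|Hgt]].
  - rewrite (vscore_upd_fresh_left c m x i t l r p (1 - p)); auto; try nra.
    pointwise_lra Hoth.
  - rewrite (vscore_upd_leftmost c m x i p r r (1 - p) (1 - p)), nat_pos_upd_join, Np, INR_3;
      auto; try lra.
    pointwise_lra Hoth.
  - destruct (Rtotal_order t (1 - p)) as [Hlt|[->|Hgt']].
    + rewrite (vscore_upd_fresh_gap c m x i t l r p (1 - p)); auto; try lra.
      pointwise_lra Hoth.
    + rewrite (vscore_upd_rightmost c m x i (1 - p) l l p p), nat_pos_upd_join, Nq, INR_3;
        auto; try lra.
      pointwise_lra Hoth.
    + rewrite (vscore_upd_fresh_right c m x i t l r p (1 - p)); auto; try nra.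
      pointwise_lra Hoth.
Qed.

Lemma two_pairs_NCNE c x : 0 <= c < 1 ->
  nat_pos 4 x ((1 + c) / 4) = 2%nat -> nat_pos 4 x (1 - (1 + c) / 4) = 2%nat -> is_NCNE c 4 x.
Proof.
  intros Hc Np Nq. set (p := (1 + c) / 4) in *.
  pose proof (nat_pos_cover2 4 x p (1 - p) ltac:(unfold p; lra) ltac:(lia)) as Hall.
  destruct (nat_pos_witness 4 x p ltac:(lia)) as [l [Hl El]].
  destruct (nat_pos_witness 4 x (1 - p) ltac:(lia)) as [r [Hr Er]].
  split; [apply is_NE_of_best_response|exists l, r; unfold p in *; repeat split; auto; lra].
  - intros j Hj. destruct (Hall j Hj); unfold p in *; lra.
  - intros i Hi. destruct (Hall i Hi) as [E|E].
    + now apply (two_pairs_left_best_response c 4 x i p).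
    + apply best_response_of_refl, (two_pairs_left_best_response c 4 (refl x) i p); auto.
      all: rewrite ?nat_pos_refl; unfold refl; try lra.
      * intros j Hj. destruct (Hall j Hj); lra.
      * exact Nq.
      * now replace (1 - (1 - p)) with p by ring.
Qed.

Lemma pair_single_pair_NCNE c x : 0 <= c < 1 ->
  nat_pos 5 x ((1 + 2 * c) / 6) = 2%nat -> nat_pos 5 x (1 / 2) = 1%nat ->
  nat_pos 5 x (1 - (1 + 2 * c) / 6) = 2%nat -> is_NCNE c 5 x.
Proof.
  intros Hc Np Nh Nq. set (p := (1 + 2 * c) / 6) in *.
  pose proof (nat_pos_cover3 5 x p (1 / 2) (1 - p) ltac:(unfold p; lra) ltac:(unfold p; lra)
                ltac:(unfold p; lra) ltac:(lia)) as Hall.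
  destruct (nat_pos_witness 5 x p ltac:(lia)) as [l [Hl El]].
  destruct (nat_pos_witness 5 x (1 - p) ltac:(lia)) as [r [Hr Er]].
  split; [apply is_NE_of_best_response|exists l, r; unfold p in *; repeat split; auto; lra].
  - intros j Hj. destruct (Hall j Hj) as [|[|]]; unfold p in *; lra.
  - intros i Hi. destruct (Hall i Hi) as [E|[E|E]].
    + now apply (pair_single_pair_left_best_response c 5 x i p).
    + now apply (pair_single_pair_middle_best_response c 5 x i p).
    + apply best_response_of_refl, (pair_single_pair_left_best_response c 5 (refl x) i p); auto.
      all: rewrite ?nat_pos_refl; unfold refl; try lra.
      * intros j Hj. destruct (Hall j Hj) as [|[|]]; lra.
      * exact Nq.
      * now replace (1 - 1 / 2) with (1 / 2) by field.
      * now replace (1 - (1 - p)) with p by ring.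
Qed.

Theorem corollary3 (c : R) (hc : 0 <= c < 1) :
  (forall x : nat -> R,
     is_NCNE c 4 x <->
     (nat_pos 4 x ((1 + c) / 4) = 2%nat /\ nat_pos 4 x (1 - (1 + c) / 4) = 2%nat)) /\
  (forall x : nat -> R,
     is_NCNE c 5 x <->
     (nat_pos 5 x ((1 + 2 * c) / 6) = 2%nat /\ nat_pos 5 x (1 / 2) = 1%nat /\
      nat_pos 5 x (1 - (1 + 2 * c) / 6) = 2%nat)).
Proof.
  split; intros x; split.
  - now apply NCNE4_positions.
  - intros [Np Nq]. now apply two_pairs_NCNE.
  - now apply NCNE5_positions.
  - intros (Np & Nh & Nq). now apply pair_single_pair_NCNE.
Qed.
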